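(* Let $\omega\colon\mathbf Z_+\to(0,+\infty)$ be a positive weight, let $\mu\in\mathbf C\setminus\{0\}$ and let $f(z)=\sum_{k\ge3}c_kz^k\in\mathcal X_\omega$ be such that for every $m\ge1$ and every $n\ge0$, \[\frac{\mu^{-1}c_{(3m+2)2^n}}{\omega((3m+2)2^n)}=\frac{c_{(2m+1)2^n}}{\omega((2m+1)2^n)}\quad\text{and}\quad c_{2^{n+2}}=0.\] Then for every $k\ge3$ with $k\notin\{2^i;\ i\ge2\}$ there exist integer sequences $(m_n)_{n\ge1}$, $(p_n)_{n\ge1}$, $(j_n)_{n\ge1}$ such that: (i) $c_k=\big(\mu^{-n}\omega((2m_1+1)2^{p_1})/\omega((3m_n+2)2^{p_n})\big)\,c_{(3m_n+2)2^{p_n}}$ for every $n\ge1$; (ii) $m_n\ge1$ for every $n\ge1$; (iii) $3m_n+2=T^{j_n}(k)$ for every $n\ge1$; (iv) for every $n\ge1$, $j_{n+1}>j_n$ if and only if $3m_n+2\notin\{2^i;\ i\ge2\}$; (v) $(j_n)_{n\ge1}$ and $((3m_n+2)2^{p_n})_{n\ge1}$ are either both strictly increasing or both stationary.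
   Context: $T\colon\mathbf Z_+\to\mathbf Z_+$ is the modified Collatz map: $T(n)=n/2$ for $n$ even, $T(n)=(3n+1)/2$ for $n$ odd. $\mathcal X_\omega$ is the Hilbert space of holomorphic functions $f(z)=\sum_{n\ge3}c_nz^n$ on the unit disk with $\|f\|_\omega^2=\sum_{n\ge3}|c_n|^2/\omega(n)<\infty$. *)

From Stdlib Require Import Reals Arith.
From Coquelicot Require Import Coquelicot.

(* Modified Collatz map T on positive integers (T 0 = 0 is irrelevant). *)
Definition T (n : nat) : nat :=
  if Nat.even n then Nat.div n 2 else Nat.div (3 * n + 1) 2.

Definition Titer (j k : nat) : nat := Nat.iter j T k.

Definition pow2_ge4 (n : nat) : Prop := exists i : nat, (2 <= i)%nat /\ n = (2 ^ i)%nat.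

(* f(z) = sum_{n>=3} c_n z^n, represented by its coefficient sequence c,
   belongs to X_omega: c_n = 0 for n < 3, f is holomorphic on the unit disk
   (the power series converges on |z| < 1), and sum |c_n|^2/omega(n) < oo. *)
Definition in_X (omega : nat -> R) (c : nat -> C) : Prop :=
  (forall n : nat, (n < 3)%nat -> c n = 0%C) /\
  (forall z : C, Cmod z < 1 -> ex_pseries c z) /\
  ex_series (fun n : nat => (Cmod (c n)) ^ 2 / omega n).

Definition strictly_incr (s : nat -> nat) : Prop :=
  forall n : nat, (1 <= n)%nat -> (s n < s (S n))%nat.

Definition stationary (s : nat -> nat) : Prop :=
  exists N : nat, (1 <= N)%nat /\ forall n : nat, (N <= n)%nat -> s n = s N.

From Stdlib Require Import Reals Arith Lia Lra Classical.
From Coquelicot Require Import Coquelicot.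

(* Write k = (2m+1)2^p with m >= 1 (possible since k is not a power of 2).
   The hypothesis says that c_n/omega(n) at (2m+1)2^p is mu^-1 times its value
   at (3m+2)2^p, and T^(p+1) maps (2m+1)2^p to 3m+2.  Writing (3m+2)2^p again
   as (2m'+1)2^p' and iterating follows the Collatz orbit of k, picking up a
   factor mu^-1 at each step.  The iteration stalls exactly when 3m+2 is a
   power of 2; then (3m+2)2^p is a power of 2 at least 4, its coefficient
   vanishes, hence c_k = 0 and the sequences can be frozen.  Otherwise
   (3m+2)2^p = (2m'+1)2^p' < (3m'+2)2^p', so both sequences increase. *)

Local Open Scope nat_scope.

Fixpoint odd_decomp_fuel (fuel n : nat) : nat * nat :=
  match fuel with
  | O => (0, 0)
  | S fuel =>
      if Nat.even n then let (a, b) := odd_decomp_fuel fuel (Nat.div2 n) in (a, S b)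
      else (Nat.div2 n, 0)
  end.

(* Each recursive call halves [n], so [n] units of fuel suffice. *)
Definition odd_decomp (n : nat) : nat * nat := odd_decomp_fuel n n.

Lemma odd_decomp_fuel_spec fuel n :
  0 < n <= fuel ->
  let (a, b) := odd_decomp_fuel fuel n in n = (2 * a + 1) * 2 ^ b.
Proof.
  revert n; induction fuel as [|fuel IH]; intros n Hn; [lia|]; cbn [odd_decomp_fuel].
  destruct (Nat.even n) eqn:Hev.
  - apply Nat.even_spec in Hev as [h ->]. rewrite Nat.div2_double.
    specialize (IH h ltac:(lia)). destruct (odd_decomp_fuel fuel h) as [a b].
    rewrite Nat.pow_succ_r'. lia.
  - assert (Hodd : Nat.odd n = true) by (unfold Nat.odd; rewrite Hev; reflexivity).
    apply Nat.odd_spec in Hodd as [h ->]. rewrite Nat.add_1_r, Nat.div2_succ_double. cbn. lia.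
Qed.

Lemma odd_decomp_spec n :
  0 < n -> let (a, b) := odd_decomp n in n = (2 * a + 1) * 2 ^ b.
Proof. intros Hn. apply odd_decomp_fuel_spec. lia. Qed.

Lemma odd_mul_pow2_eq_pow2 a b i : (2 * a + 1) * 2 ^ b = 2 ^ i -> a = 0.
Proof.
  revert i; induction b as [|b IH]; intros [|i] E; rewrite ?Nat.pow_succ_r' in E;
    cbn [Nat.pow] in E; try lia.
  apply (IH i). nia.
Qed.

Lemma pow2_ge4_pow2 b : 3 <= 2 ^ b -> pow2_ge4 (2 ^ b).
Proof. intros Hb. exists b. split; [|reflexivity]. destruct b as [|[|b]]; cbn in Hb; lia. Qed.

Lemma odd_mul_pow2_not_pow2_ge4 a b : 1 <= a -> ~ pow2_ge4 ((2 * a + 1) * 2 ^ b).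
Proof. intros Ha [i [_ E]]. apply odd_mul_pow2_eq_pow2 in E. lia. Qed.

Lemma T_double n : T (2 * n) = n.
Proof.
  unfold T. rewrite Nat.even_mul. cbn [Nat.even orb].
  rewrite Nat.mul_comm. apply Nat.div_mul. lia.
Qed.

Lemma T_odd a : T (2 * a + 1) = 3 * a + 2.
Proof.
  unfold T. rewrite Nat.even_add, Nat.even_mul. cbn [Nat.even orb Bool.eqb].
  replace (3 * (2 * a + 1) + 1) with ((3 * a + 2) * 2) by lia. apply Nat.div_mul. lia.
Qed.

Lemma Titer_add i j n : Titer (i + j) n = Titer i (Titer j n).
Proof. apply Nat.iter_add. Qed.

Lemma Titer_mul_pow2 b n : Titer b (n * 2 ^ b) = n.
Proof.
  revert n; induction b as [|b IH]; intros n; [cbn; lia|].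
  unfold Titer in *. rewrite Nat.iter_succ_r, Nat.pow_succ_r'.
  replace (n * (2 * 2 ^ b)) with (2 * (n * 2 ^ b)) by lia. rewrite T_double. apply IH.
Qed.

Lemma Titer_odd_mul_pow2 a b : Titer (S b) ((2 * a + 1) * 2 ^ b) = 3 * a + 2.
Proof.
  rewrite <- Nat.add_1_l, Titer_add, Titer_mul_pow2. unfold Titer. cbn. apply T_odd.
Qed.

(* The state (m, p, j) carries the pair (2m+1)2^p, (3m+2)2^p related by the
   hypothesis, together with the number j of Collatz steps from k to 3m+2. *)
Record state := State { st_m : nat; st_p : nat; st_j : nat }.

Definition st_in (s : state) : nat := (2 * st_m s + 1) * 2 ^ st_p s.
Definition st_out (s : state) : nat := (3 * st_m s + 2) * 2 ^ st_p s.

Definition step (s : state) : state :=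
  let (a, b) := odd_decomp (3 * st_m s + 2) in
  if a =? 0 then s else State a (st_p s + b) (S b + st_j s).

Definition initial_state (k : nat) : state :=
  let (a, b) := odd_decomp k in State a b (S b).

Definition orbit (k i : nat) : state := Nat.iter i step (initial_state k).

Lemma st_in_lt_st_out s : st_in s < st_out s.
Proof.
  unfold st_in, st_out. apply Nat.mul_lt_mono_pos_r; [|lia].
  apply Nat.neq_0_lt_0, Nat.pow_nonzero. lia.
Qed.

Variant step_spec (s : state) : state -> Prop :=
  | StepStall : pow2_ge4 (3 * st_m s + 2) -> step_spec s s
  | StepMove a b : 1 <= a -> 3 * st_m s + 2 = (2 * a + 1) * 2 ^ b ->
      step_spec s (State a (st_p s + b) (S b + st_j s)).

Lemma stepP s : 1 <= st_m s -> step_spec s (step s).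
Proof.
  intros Hm. unfold step.
  pose proof (odd_decomp_spec (3 * st_m s + 2) ltac:(lia)) as Hdec.
  destruct (odd_decomp (3 * st_m s + 2)) as [a b].
  destruct (Nat.eqb_spec a 0) as [-> | Ha].
  - constructor. replace (3 * st_m s + 2) with (2 ^ b) by lia.
    apply pow2_ge4_pow2. lia.
  - constructor; lia.
Qed.

Section Orbit.

Variable k : nat.
Hypothesis Hk3 : 3 <= k.
Hypothesis Hk : ~ pow2_ge4 k.

Lemma orbit_S i : orbit k (S i) = step (orbit k i).
Proof. reflexivity. Qed.

Lemma st_in_orbit0 : st_in (orbit k 0) = k.
Proof.
  unfold orbit, initial_state, st_in; cbn [Nat.iter].
  pose proof (odd_decomp_spec k ltac:(lia)) as Hdec.
  destruct (odd_decomp k) as [a b]. cbn. lia.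
Qed.

Lemma orbit_m_pos i : 1 <= st_m (orbit k i).
Proof.
  induction i as [|i IH].
  - pose proof st_in_orbit0 as Hin. unfold st_in in Hin.
    destruct (st_m (orbit k 0)) as [|a]; [|lia].
    exfalso. apply Hk. rewrite <- Hin, Nat.mul_1_l. apply pow2_ge4_pow2. lia.
  - rewrite orbit_S. destruct (stepP _ IH); cbn; lia.
Qed.

Lemma orbit_Titer i : Titer (st_j (orbit k i)) k = 3 * st_m (orbit k i) + 2.
Proof.
  induction i as [|i IH].
  - rewrite <- st_in_orbit0 at 2.
    unfold orbit, initial_state, st_in; cbn [Nat.iter].
    destruct (odd_decomp k) as [a b]. apply Titer_odd_mul_pow2.
  - rewrite orbit_S. destruct (stepP _ (orbit_m_pos i)) as [_ | a b _ E]; [exact IH|].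
    cbn [st_j st_m]. rewrite Titer_add, IH, E. apply Titer_odd_mul_pow2.
Qed.

Lemma orbit_stall i :
  pow2_ge4 (3 * st_m (orbit k i) + 2) -> orbit k (S i) = orbit k i.
Proof.
  intros Hpow. rewrite orbit_S.
  destruct (stepP _ (orbit_m_pos i)) as [_ | a b Ha E]; [reflexivity|].
  rewrite E in Hpow. destruct (odd_mul_pow2_not_pow2_ge4 a b Ha Hpow).
Qed.

Lemma orbit_move i :
  ~ pow2_ge4 (3 * st_m (orbit k i) + 2) ->
  st_j (orbit k i) < st_j (orbit k (S i)) /\ st_in (orbit k (S i)) = st_out (orbit k i).
Proof.
  intros Hpow. rewrite orbit_S.
  destruct (stepP _ (orbit_m_pos i)) as [Hpow' | a b _ E]; [contradiction|].
  unfold st_in, st_out; cbn [st_m st_p st_j]. rewrite E, Nat.pow_add_r. lia.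
Qed.

Lemma orbit_j_lt_iff i :
  st_j (orbit k i) < st_j (orbit k (S i)) <-> ~ pow2_ge4 (3 * st_m (orbit k i) + 2).
Proof.
  split.
  - intros Hlt Hpow. rewrite (orbit_stall i Hpow) in Hlt. lia.
  - intros Hpow. apply (orbit_move i Hpow).
Qed.

Lemma orbit_stationary_or_increasing :
  (exists i0, forall i, i0 <= i -> orbit k i = orbit k i0) \/
  (forall i, st_j (orbit k i) < st_j (orbit k (S i)) /\
             st_out (orbit k i) < st_out (orbit k (S i))).
Proof.
  destruct (classic (exists i0, pow2_ge4 (3 * st_m (orbit k i0) + 2)))
    as [[i0 Hpow] | Hnever].
  - left. exists i0. intros i Hi. induction Hi as [|i Hi IH]; [reflexivity|].
    rewrite <- IH in Hpow |- *. now apply orbit_stall.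
  - right. intros i.
    assert (Hpow : ~ pow2_ge4 (3 * st_m (orbit k i) + 2)) by eauto.
    destruct (orbit_move i Hpow) as [Hj Hin].
    split; [exact Hj|]. rewrite <- Hin. apply st_in_lt_st_out.
Qed.

Section Coefficients.

Local Close Scope nat_scope.

Variables (omega : nat -> R) (mu : C) (c : nat -> C).
Hypothesis Homega : forall n : nat, (1 <= n)%nat -> 0 < omega n.
Hypothesis Hrel : forall m n : nat, (1 <= m)%nat ->
  (/ mu * c ((3 * m + 2) * 2 ^ n)%nat / RtoC (omega ((3 * m + 2) * 2 ^ n)%nat))%C
  = (c ((2 * m + 1) * 2 ^ n)%nat / RtoC (omega ((2 * m + 1) * 2 ^ n)%nat))%C.
Hypothesis Hc_pow2 : forall n : nat, c (2 ^ (n + 2))%nat = 0%C.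

Let wcoef (n : nat) : C := (c n / RtoC (omega n))%C.

Lemma wcoef_st_in s : (1 <= st_m s)%nat -> wcoef (st_in s) = (/ mu * wcoef (st_out s))%C.
Proof. intros Hm. unfold wcoef, st_in, st_out. rewrite <- Hrel by exact Hm. unfold Cdiv. ring. Qed.

Lemma c_st_out_stall s : pow2_ge4 (3 * st_m s + 2) -> c (st_out s) = 0.
Proof.
  intros [a [Ha E]]. unfold st_out. rewrite E, <- Nat.pow_add_r.
  replace (a + st_p s)%nat with (a + st_p s - 2 + 2)%nat by lia. apply Hc_pow2.
Qed.

Lemma wcoef_orbit i :
  wcoef (st_in (orbit k 0)) = ((/ mu) ^ S i * wcoef (st_out (orbit k i)))%C.
Proof.
  induction i as [|i IH].
  - rewrite Cpow_1_r. apply wcoef_st_in, orbit_m_pos.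
  - destruct (classic (pow2_ge4 (3 * st_m (orbit k i) + 2))) as [Hpow | Hpow].
    + rewrite (orbit_stall i Hpow), IH. unfold wcoef.
      rewrite (c_st_out_stall _ Hpow), (Cpow_S _ (S i)). unfold Cdiv. ring.
    + destruct (orbit_move i Hpow) as [_ Hin].
      rewrite IH, <- Hin, wcoef_st_in, (Cpow_S _ (S i)) by apply orbit_m_pos. ring.
Qed.

Lemma coef_orbit i :
  c k = ((/ mu) ^ S i * RtoC (omega (st_in (orbit k 0)) / omega (st_out (orbit k i)))
         * c (st_out (orbit k i)))%C.
Proof.
  assert (Homega_nz : forall n, (1 <= n)%nat -> RtoC (omega n) <> 0).
  { intros n Hn E. apply RtoC_inj in E. specialize (Homega n Hn). lra. }
  assert (Hout : (1 <= st_out (orbit k i))%nat).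
  { unfold st_out. pose proof (Nat.pow_nonzero 2 (st_p (orbit k i))). nia. }
  pose proof (wcoef_orbit i) as Hw. unfold wcoef in Hw. rewrite st_in_orbit0 in Hw |- *.
  transitivity (RtoC (omega k) * (c k / RtoC (omega k)))%C.
  { field. apply Homega_nz. lia. }
  rewrite Hw, RtoC_div by (apply Rgt_not_eq, Homega, Hout).
  field. now apply Homega_nz.
Qed.

End Coefficients.

End Orbit.

Local Close Scope nat_scope.

Theorem lemma2p8 (omega : nat -> R) (mu : C) (c : nat -> C) :
  (forall n : nat, (1 <= n)%nat -> 0 < omega n) ->
  mu <> 0%C ->
  in_X omega c ->
  (forall m n : nat, (1 <= m)%nat ->
     (/ mu * c ((3 * m + 2) * 2 ^ n)%nat / RtoC (omega ((3 * m + 2) * 2 ^ n)%nat))%C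
     = (c ((2 * m + 1) * 2 ^ n)%nat / RtoC (omega ((2 * m + 1) * 2 ^ n)%nat))%C) ->
  (forall n : nat, c (2 ^ (n + 2))%nat = 0%C) ->
  forall k : nat, (3 <= k)%nat -> ~ pow2_ge4 k ->
  exists (m p j : nat -> nat),
    (forall n : nat, (1 <= n)%nat ->
       c k = ((/ mu) ^ n * RtoC (omega ((2 * m 1 + 1) * 2 ^ p 1)%nat
                                  / omega ((3 * m n + 2) * 2 ^ p n)%nat)
              * c ((3 * m n + 2) * 2 ^ p n)%nat)%C) /\
    (forall n : nat, (1 <= n)%nat -> (1 <= m n)%nat) /\
    (forall n : nat, (1 <= n)%nat -> (3 * m n + 2)%nat = Titer (j n) k) /\
    (forall n : nat, (1 <= n)%nat ->
       ((j n < j (S n))%nat <-> ~ pow2_ge4 (3 * m n + 2))) /\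
    ((strictly_incr j /\ strictly_incr (fun n => (3 * m n + 2) * 2 ^ p n)%nat) \/
     (stationary j /\ stationary (fun n => (3 * m n + 2) * 2 ^ p n)%nat)).
Proof.
  intros Homega _ _ Hrel Hc_pow2 k Hk3 Hk.
  exists (fun n => st_m (orbit k (pred n))), (fun n => st_p (orbit k (pred n))),
    (fun n => st_j (orbit k (pred n))).
  split; [|split; [|split; [|split]]];
    try (intros [|n] Hn; [lia|]; cbn [pred]).
  - exact (coef_orbit k Hk3 Hk omega mu c Homega Hrel Hc_pow2 n).
  - exact (orbit_m_pos k Hk3 Hk n).
  - symmetry. exact (orbit_Titer k Hk3 Hk n).
  - exact (orbit_j_lt_iff k Hk3 Hk n).
  - destruct (orbit_stationary_or_increasing k Hk3 Hk) as [[i0 Hstat] | Hincr].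
    + right. split; exists (S i0); split; [lia| |lia|]; intros n Hn;
        rewrite (Hstat (pred n)) by lia; reflexivity.
    + left. split; intros [|n] Hn; [lia| apply Hincr | lia | apply Hincr].
Qed.
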